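(* Let $n$ and $\omega$ be positive integers with $\omega\ge\lfloor 3n/4\rfloor$. If $\mathbf{s}_n\in\mathcal{B}(n,\lceil n/2\rceil)$ with $add(\mathbf{s}_n)=\omega-\lceil n/2\rceil$, then $\mathbf{s}_n$ is a sequence representative of its shift equivalence class $E(\mathbf{s}_n)$, i.e. $add(\mathbf{s}_n)\ge add(\mathbf{a})$ for all $\mathbf a\in E(\mathbf{s}_n)$.
   Context: All sequences are binary (entries in $\mathbb{Z}_2$), $\overline{x}=x\oplus1$, $x\bmod d$ is the least nonnegative residue, and $\mathbf{a}^q$ is the concatenation of $q$ copies of $\mathbf a$. For $\mathbf{s}_n=(s_0,\dots,s_{n-1})$, $\mathbf{s}_j=(s_0,\dots,s_{j-1})$. A length-$m$ sequence is periodic if it is the concatenation of $m/e$ copies of a length-$e$ sequence for a proper divisor $e$ of $m$, aperiodic otherwise. Right circular shift: $R^k(\mathbf{s}_n)=(s_{n-k},\dots,s_{n-1},s_0,\dots,s_{n-k-1})$, $0\le k<n$. For $c\ge\lfloor n/2\rfloor$ and $1\le d\le\min\{n-c,\lfloor n/2\rfloor\}$, $\mathcal{B}(n,c,d)$ is the set of aperiodic length-$n$ sequences $\mathbf{s}_n$ with $\mathbf{s}_d$ aperiodic and $\mathbf{s}_{c+d}=(s_0,\dots,s_{d-1})^q(s_0,\dots,s_{r-1},\overline{s_r})$, where $q=\lfloor(c+d-1)/d\rfloor$, $r=c+d-1-qd$, and $s_{c+d},\dots,s_{n-1}$ are arbitrary. $\mathcal{B}(n,c)=\bigcup_{d=1}^{\min\{n-c,\lfloor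 n/2\rfloor\}}\mathcal{B}(n,c,d)$. For $\mathbf{s}_n\in\mathcal{B}(n,c,d)$, $add(\mathbf{s}_n)$ is the integer $t\ge0$ such that $s_{n-1-i}=s_{(d-1-i)\bmod d}$ for $0\le i<t$ and $s_{n-1-t}\neq s_{(d-1-t)\bmod d}$. Here $E(\mathbf{s}_n)=\{R^k(\mathbf{s}_n):0\le k<n\}\cap\mathcal{B}(n,\lceil n/2\rceil)$. *)

(* Binary sequences are represented as [seq bool]
   (false = 0, true = 1, negb = complement x (+) 1). *)
From mathcomp Require Import all_boot.
Set Implicit Arguments. Unset Strict Implicit. Unset Printing Implicit Defensive.

Definition periodic (s : seq bool) : Prop :=
  exists e : nat, [/\ 0 < e, e < size s, e %| size s &
    s = flatten (nseq (size s %/ e) (take e s))].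

Definition aperiodic (s : seq bool) : Prop := ~ periodic s.

Definition inB (n c d : nat) (s : seq bool) : Prop :=
  let q := (c + d - 1) %/ d in
  let r := (c + d - 1) %% d in
  [/\ size s = n, n./2 <= c, 1 <= d & d <= minn (n - c) n./2] /\
  [/\ aperiodic s, aperiodic (take d s) &
      take (c + d) s =
        flatten (nseq q (take d s)) ++ take r s ++ [:: ~~ nth false s r]].

Definition inBc (n c : nat) (s : seq bool) : Prop := exists d, inB n c d s.

(* add(s) for s in B(n,c,d): the least t with
   s_{n-1-t} <> s_{(d-1-t) mod d}; note (d-1-t) mod d = d-1-(t mod d).
   (Such t < n always exists for s in B(n,c,d); [find] returns n otherwise.) *)
Definition add (d : nat) (s : seq bool) : nat :=
  find (fun i => nth false s ((size s).-1 - i) != nth false s (d.-1 - i %% d))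
       (iota 0 (size s)).

Definition Rshift (k : nat) (s : seq bool) : seq bool := rotr k s.

(* The n-periodic extension X of s agrees with the d-periodic extension of its
   prefix s_d exactly on the window [-add(s), c + d - 1): the prefix condition of
   B(n, c, d) fixes the right end, and add(s) measures how far the agreement
   extends to the left.  So add(s) + c - 1 is the excess (length minus period) of
   a maximal d-periodic window, a run, of X, and every shift of s in B(n, c)
   contributes such a run of X, translated by the shift.  It then suffices to show
   that in an aperiodic n-periodic X a run with primitive period d <= n/2 and
   excess e, 3n <= 4e + 7, is not beaten by any run with primitive period
   g <= n/2.  Two such runs either overlap (in suitable copies mod n) on at least
   d + g - 1 positions, and then Fine and Wilf's theorem yields the period
   gcd(d, g), contradicting primitivity, or all their overlaps are short and a case
   analysis on their relative position forces a boundary mismatch of one run to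
   be a match. *)

From Stdlib Require Import ZArith Lia.
From mathcomp Require Import all_boot zify.

Set Implicit Arguments. Unset Strict Implicit. Unset Printing Implicit Defensive.

Local Open Scope Z_scope.

Definition is_period (P : Z -> bool) (p : Z) := forall i, P (i + p) = P i.

Definition is_period_on (P : Z -> bool) (lo hi p : Z) :=
  forall i, lo <= i -> i + p < hi -> P i = P (i + p).

Definition primitive (P : Z -> bool) (p : Z) :=
  forall q, 0 < q < p -> (q | p) -> ~ is_period P q.

Lemma is_period_congr P p m i j : is_period P p -> j = i + m * p -> P i = P j.
Proof.
move=> Pp ->.
have Pnat k x : P (x + Z.of_nat k * p) = P x.
  elim: k x => [|k IHk] x; first by congr P; lia.
  by rewrite -(IHk x) -(Pp (x + Z.of_nat k * p)); congr P; lia.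
case: (Z_le_gt_dec 0 m) => m_ge0; first by rewrite -(Z2Nat.id m m_ge0) Pnat.
by rewrite -(Pnat (Z.to_nat (- m)) (i + m * p)); congr P; lia.
Qed.

Lemma Z_gcd_gt0 p q : 0 < p -> 0 < Z.gcd p q.
Proof.
by have := Z.gcd_nonneg p q; case: (Z.eq_dec (Z.gcd p q) 0) => [/Z.gcd_eq_0_l|]; lia.
Qed.

Lemma is_period_on_dvd P lo hi p i j : is_period_on P lo hi p ->
  0 < p -> lo <= i < hi -> lo <= j < hi -> (p | j - i) -> P i = P j.
Proof.
move=> Pp p_gt0 Hi Hj [m Em].
wlog m_ge0 : i j m Hi Hj Em / 0 <= m.
  move=> gen; case: (Z_le_gt_dec 0 m) => m_ge0; first exact: gen Em m_ge0.
  by symmetry; apply: (gen j i (- m)) => //; lia.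
have {Em}Ej : j = i + Z.of_nat (Z.to_nat m) * p by rewrite Z2Nat.id //; lia.
rewrite {}Ej in Hj *; move: Hj; elim: (Z.to_nat m) => [|k IHk] Hj.
  by congr P; lia.
rewrite IHk; last by nia.
by rewrite Pp; [congr P|..]; nia.
Qed.

Lemma is_period_of_window U d g w : is_period U d -> is_period_on U w (w + d) g ->
  0 < g -> 0 < d -> (g | d) -> is_period U g.
Proof.
move=> Ud Ug g_gt0 d_gt0 g_dvd_d i.
pose r := w + (i - w) mod d.
have r_win : w <= r < w + d by have := Z.mod_pos_bound (i - w) d d_gt0; lia.
have Ui : U i = U r.
  by apply: (is_period_congr (m := - ((i - w) / d)) Ud); have := Z.div_mod (i - w) d; lia.
have Uig : U (i + g) = U (r + g).
  by apply: (is_period_congr (m := - ((i - w) / d)) Ud); have := Z.div_mod (i - w) d; lia.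
rewrite Ui Uig; case: (Z_lt_le_dec (r + g) (w + d)) => C; first by symmetry; apply: Ug; lia.
rewrite (@is_period_congr U d (-1) (r + g) (r + g - d) Ud); last by lia.
have g_le_d := Z.divide_pos_le g d d_gt0 g_dvd_d.
apply: (is_period_on_dvd Ug) => //; first by lia.
rewrite (_ : r - (r + g - d) = d - g); last by lia.
exact: Z.divide_sub_r g_dvd_d (Z.divide_refl g).
Qed.

Lemma is_period_on_sub P lo hi lo' hi' p : is_period_on P lo hi p ->
  lo <= lo' -> hi' <= hi -> is_period_on P lo' hi' p.
Proof. by move=> Pp le_lo le_hi i Hi Hip; apply: Pp; lia. Qed.

Lemma is_period_on_extend P lo hi p g : is_period_on P lo hi p ->
  is_period_on P lo (lo + p) g -> 0 < g -> 0 < p -> (g | p) -> lo + p <= hi ->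
  is_period_on P lo hi g.
Proof.
move=> Pp Pg g_gt0 p_gt0 g_dvd_p le_p_hi.
pose V i := P (lo + (i - lo) mod p).
have V_mod i : 0 <= (i - lo) mod p < p := Z.mod_pos_bound _ _ p_gt0.
have PV i : lo <= i < hi -> P i = V i.
  move=> Hi; apply: (is_period_on_dvd Pp) => //; first by have := V_mod i; lia.
  by exists (- ((i - lo) / p)); have := Z.div_mod (i - lo) p; lia.
have Vp : is_period V p.
  move=> i; rewrite /V (_ : i + p - lo = i - lo + 1 * p) ?Z_mod_plus_full //; lia.
have Vg : is_period V g.
  apply: (is_period_of_window Vp (w := lo)) => // i Hi Hig.
  by rewrite -!PV; [apply: Pg|..]; lia.
by move=> i Hi Hig; rewrite !PV; [rewrite Vg|..]; lia.
Qed.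

Lemma fine_wilf P lo hi p q : is_period_on P lo hi p -> is_period_on P lo hi q ->
  0 < p -> 0 < q -> p + q - Z.gcd p q <= hi - lo -> is_period_on P lo hi (Z.gcd p q).
Proof.
have [N] := ubnP (Z.to_nat (p + q)).
elim: N hi p q => // N IHN hi p q pqN Pp Pq p_gt0 q_gt0 long.
wlog le_pq : p q Pp Pq p_gt0 q_gt0 pqN long / p <= q.
  move=> gen; case: (Z_le_gt_dec p q) => C; first exact: gen.
  by rewrite Z.gcd_comm; apply: gen => //; rewrite 1?Z.gcd_comm; lia.
case: (Z.eq_dec p q) => [<-|ne_pq]; first by rewrite Z.gcd_diag_nonneg //; lia.
have gcd_sub : Z.gcd p (q - p) = Z.gcd p q := Z.gcd_sub_diag_r p q.
have gcd_dvd_qp : (Z.gcd p q | q - p) by rewrite -gcd_sub; apply: Z.gcd_divide_r.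
have gcd_le_qp : Z.gcd p q <= q - p by apply: Z.divide_pos_le => //; lia.
have gcd_gt0 := Z_gcd_gt0 q p_gt0.
have Pqp : is_period_on P lo (hi - p) (q - p).
  move=> i Hi Hiq; transitivity (P (i + q)); first by apply: Pq; lia.
  by rewrite (Pp (i + (q - p))); [congr P|..]; lia.
have Pg : is_period_on P lo (hi - p) (Z.gcd p q).
  rewrite -gcd_sub; apply: IHN; rewrite ?gcd_sub //; try lia.
  by apply: is_period_on_sub Pp _ _; lia.
apply: (is_period_on_extend Pp) => //; try lia; last exact: Z.gcd_divide_l.
by apply: is_period_on_sub Pg _ _; lia.
Qed.

Definition run (X U : Z -> bool) (d lo hi : Z) :=
  [/\ is_period U d, forall i, lo <= i < hi -> X i = U i,
      X (lo - 1) <> U (lo - 1) & X hi <> U hi].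

Lemma run_shift X X' U d lo hi lo' hi' s : run X U d lo hi ->
  (forall i, X' i = X (i + s)) -> lo' = lo - s -> hi' = hi - s ->
  run X' (fun j => U (j + s)) d lo' hi'.
Proof.
move=> [Ud XU Xlo Xhi] X'E -> ->; split.
- by move=> j /=; rewrite -(Ud (j + s)); congr U; lia.
- by move=> i Hi; rewrite X'E XU //; lia.
- by rewrite X'E (_ : lo - s - 1 + s = lo - 1) //; lia.
- by rewrite X'E (_ : hi - s + s = hi) //; lia.
Qed.

Lemma primitive_shift P p s : primitive P p -> primitive (fun j => P (j + s)) p.
Proof.
move=> Pprim q Hq q_dvd_p Pq; apply: (Pprim q Hq q_dvd_p) => j.
by have := Pq (j - s); rewrite /= (_ : j - s + q + s = j + q) 1?(_ : j - s + s = j); lia.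
Qed.

Lemma run_length_lt X U n d lo hi : is_period X n -> is_period U d ->
  (forall i, lo <= i < hi -> X i = U i) -> X hi <> U hi -> 0 < n -> 0 < d ->
  hi - lo < n + d.
Proof.
move=> Xn Ud XU Xhi n_gt0 d_gt0; case: (Z_lt_le_dec (hi - lo) (n + d)) => // long.
case: Xhi; transitivity (U (hi - n - d)).
  rewrite (is_period_congr (m := -1) (j := hi - n) Xn) ?XU; try lia.
  by rewrite -(Ud (hi - n - d)); congr U; lia.
rewrite -XU; last by lia.
rewrite (is_period_congr (m := 1) (j := hi - d) Xn) ?XU; try lia.
by rewrite -(Ud (hi - d)); congr U; lia.
Qed.

Section RunCopies.

Variables (X U : Z -> bool) (n d lo hi : Z).
Hypotheses (Xn : is_period X n) (runU : run X U d lo hi) (d_gt0 : 0 < d).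

Lemma run_copy_eq k i : k * n + lo <= i < k * n + hi -> X i = U (i - k * n).
Proof.
case: runU => _ XU _ _ Hi; rewrite -XU; last by lia.
by apply: (is_period_congr (m := - k) Xn); lia.
Qed.

Lemma run_match k i j : k * n + lo <= i -> j = i + d -> j < k * n + hi -> X i = X j.
Proof.
case: runU => Ud _ _ _ Hi -> Hj.
rewrite !(run_copy_eq (k := k)); try lia.
by rewrite -(Ud (i - k * n)); congr U; lia.
Qed.

Lemma run_mismatch_left k a b : lo + d <= hi -> a = k * n + lo - 1 -> b = a + d ->
  X a <> X b.
Proof.
case: runU => Ud _ Xlo _ long -> ->.
rewrite (is_period_congr (m := - k) (j := lo - 1) Xn); last by lia.
rewrite (run_copy_eq (k := k) (i := k * n + lo - 1 + d)); last by lia.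
by rewrite (_ : k * n + lo - 1 + d - k * n = lo - 1 + d) ?Ud //; lia.
Qed.

Lemma run_mismatch_right k a b : lo + d <= hi -> a = k * n + hi - d -> b = a + d ->
  X a <> X b.
Proof.
case: runU => Ud _ _ Xhi long -> ->.
rewrite (is_period_congr (m := - k) (i := k * n + hi - d + d) (j := hi) Xn); last by lia.
rewrite (run_copy_eq (k := k)); last by lia.
by rewrite -(Ud (k * n + hi - d - k * n)) (_ : _ + d = hi); [apply/nesym|lia].
Qed.

Lemma run_is_period_on k : is_period_on X (k * n + lo) (k * n + hi) d.
Proof. by move=> i Hi Hid; apply: (run_match (k := k)). Qed.

Lemma run_period_of_window k w w' p : is_period_on X w w' p ->
  k * n + lo <= w -> w' <= k * n + hi -> w + d <= w' -> 0 < p -> (p | d) ->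
  is_period U p.
Proof.
case: runU => Ud _ _ _ Xp Hw Hw' long p_gt0 p_dvd_d.
apply: (is_period_of_window Ud (w := w - k * n)) => // j Hj Hjp.
have UX i : k * n + lo <= i + k * n < k * n + hi -> U i = X (i + k * n).
  by move=> Hi; rewrite (run_copy_eq (k := k)) //; congr U; lia.
by rewrite !UX; [rewrite Xp; [congr X|..]|..]; lia.
Qed.

End RunCopies.

Lemma runs_overlap X U V n d g lo hi lo' hi' kU kV w w' :
  is_period X n -> run X U d lo hi -> run X V g lo' hi' -> primitive U d -> primitive V g ->
  0 < d -> 0 < g -> d <> g ->
  kU * n + lo <= w -> kV * n + lo' <= w -> w' <= kU * n + hi -> w' <= kV * n + hi' ->
  d + g - 1 <= w' - w -> False.
Proof.
move=> Xn runU runV Uprim Vprim d_gt0 g_gt0 ne_dg HwU HwV Hw'U Hw'V long.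
have gcd_gt0 := Z_gcd_gt0 g d_gt0.
have Xgcd : is_period_on X w w' (Z.gcd d g).
  apply: fine_wilf; try lia.
    by apply: is_period_on_sub (run_is_period_on Xn runU d_gt0 (k := kU)) _ _.
  by apply: is_period_on_sub (run_is_period_on Xn runV g_gt0 (k := kV)) _ _.
have gcd_dvd_d := Z.gcd_divide_l d g; have gcd_dvd_g := Z.gcd_divide_r d g.
have := Z.divide_pos_le _ _ d_gt0 gcd_dvd_d; have := Z.divide_pos_le _ _ g_gt0 gcd_dvd_g.
case: (Z.eq_dec (Z.gcd d g) d) => [gcd_d|gcd_d] le_g le_d.
  apply: (Vprim (Z.gcd d g)) => //; first by lia.
  by apply: (run_period_of_window Xn runV g_gt0 (k := kV) Xgcd) => //; lia.
apply: (Uprim (Z.gcd d g)) => //; first by lia.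
by apply: (run_period_of_window Xn runU d_gt0 (k := kU) Xgcd) => //; lia.
Qed.

Lemma run_covering_period X U n d lo hi : is_period X n -> run X U d lo hi ->
  n <= hi - lo -> 0 < d -> 0 < n -> (d | n) -> is_period X d.
Proof.
move=> Xn [Ud XU _ _] long d_gt0 n_gt0 d_dvd_n.
apply: (is_period_of_window Xn (w := lo)) => // i Hi Hid.
by rewrite !XU ?Ud //; lia.
Qed.

(* Short overlaps are excluded by a square p, p + a, p + c, p + a + c three of whose
   sides are matches inside the two runs while the fourth is a boundary mismatch. *)
Lemma square_mismatch_far (X : Z -> bool) p a c :
  X p = X (p + a) -> X (p + c) = X (p + c + a) -> X p = X (p + c) ->
  X (p + a) <> X (p + a + c) -> False.
Proof. by move=> Ea Ec Ep; apply; rewrite -Ea Ep Ec; congr X; lia. Qed.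

Lemma square_mismatch_near (X : Z -> bool) p a c :
  X p = X (p + a) -> X (p + c) = X (p + c + a) -> X (p + a) = X (p + a + c) ->
  X p <> X (p + c) -> False.
Proof. by move=> Ea Ec Eac; apply; rewrite Ea Eac Ec; congr X; lia. Qed.

Section TwoRuns.

Variables (X U V : Z -> bool) (n d g e f b : Z).
Hypotheses (Xn : is_period X n) (Xprim : primitive X n).
Hypotheses (runU : run X U d 0 (e + d)) (Uprim : primitive U d).
Hypotheses (runV : run X V g b (b + f + g)) (Vprim : primitive V g).
Hypotheses (d_gt0 : 0 < d) (g_gt0 : 0 < g) (dn : 2 * d <= n) (gn : 2 * g <= n).
Hypotheses (e_ge0 : 0 <= e) (lt_ef : e < f) (fn : f < n) (b_range : 0 <= b < n).
Hypothesis (long_e : 3 * n <= 4 * e + 7).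

Lemma runU_match k i j : k * n <= i -> j = i + d -> j < k * n + e + d -> X i = X j.
Proof. by move=> *; apply: (run_match Xn runU d_gt0 (k := k)); lia. Qed.

Lemma runV_match k i j : k * n + b <= i -> j = i + g -> j < k * n + b + f + g -> X i = X j.
Proof. by move=> *; apply: (run_match Xn runV g_gt0 (k := k)); lia. Qed.

Lemma runU_mismatch_left k i j : i = k * n - 1 -> j = i + d -> X i <> X j.
Proof. by move=> *; apply: (run_mismatch_left Xn runU d_gt0 (k := k)); lia. Qed.

Lemma runU_mismatch_right k i j : i = k * n + e -> j = i + d -> X i <> X j.
Proof. by move=> *; apply: (run_mismatch_right Xn runU d_gt0 (k := k)); lia. Qed.

Lemma runV_mismatch_left k i j : i = k * n + b - 1 -> j = i + g -> X i <> X j.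
Proof. by move=> *; apply: (run_mismatch_left Xn runV g_gt0 (k := k)); lia. Qed.

Lemma runV_mismatch_right k i j : i = k * n + b + f -> j = i + g -> X i <> X j.
Proof. by move=> *; apply: (run_mismatch_right Xn runV g_gt0 (k := k)); lia. Qed.

Lemma X_period k i j : j = i + k * n -> X i = X j.
Proof. exact: is_period_congr. Qed.

Lemma runs_periods_neq : d <> g.
Proof.
move=> eq_dg; case: (Z_le_gt_dec b e) => le_be.
  apply: (runU_mismatch_right (k := -1) (i := e - n) (j := e - n + d)); try lia.
  by apply: (runV_match (k := -1)); lia.
apply: (runU_mismatch_left (k := 0) (i := -1) (j := -1 + d)); try lia.
by apply: (runV_match (k := -1)); lia.
Qed.

Lemma runs_overlaps_short : e - g + 1 < b /\ b + f + 1 < n + d.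
Proof.
have ne_dg := runs_periods_neq.
split; rewrite Z.lt_nge => long_overlap.
  apply: (runs_overlap Xn runU runV Uprim Vprim d_gt0 g_gt0 ne_dg (kU := -1) (kV := -1)
    (w := b - n) (w' := Z.min (e + d - n) (b - n + f + g))); lia.
apply: (runs_overlap Xn runU runV Uprim Vprim d_gt0 g_gt0 ne_dg (kU := 0) (kV := -1)
  (w := 0) (w' := Z.min (e + d) (b - n + f + g))); lia.
Qed.

Lemma runs_period_lt : d < g -> False.
Proof.
have [gt_b gt_bf] := runs_overlaps_short; move=> lt_dg.
case: (Z_lt_le_dec d b) => [lt_db|le_bd].
  apply: (square_mismatch_near (p := e - n) (a := g) (c := d)).
  - by apply: (runV_match (k := -1)); lia.
  - by apply: (runV_match (k := -1)); lia.
  - by apply: (runU_match (k := 0)); lia.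
  - by apply: (runU_mismatch_right (k := -1)); lia.
apply: (square_mismatch_far (p := -1 - g) (a := g) (c := d)).
- by apply: (runV_match (k := -1)); lia.
- by apply: (runV_match (k := -1)); lia.
- by apply: (runU_match (k := -1)); lia.
- by apply: (runU_mismatch_left (k := 0)); lia.
Qed.

Lemma runs_period_gt_late_start : g < d -> d < b -> False.
Proof.
have [gt_b gt_bf] := runs_overlaps_short; move=> lt_gd lt_db.
apply: (square_mismatch_far (p := b - 1 - d) (a := d) (c := g)).
- by apply: (runU_match (k := 0)); lia.
- by apply: (runU_match (k := 0)); lia.
- by apply: (runV_match (k := -1)); lia.
- by apply: (runV_mismatch_left (k := 0)); lia.
Qed.

(* These constraints leave only n = 4m + 1 with m >= 3, and n = 9; there a chain of
   matches of the two runs joins the two ends of the right mismatch of the first run. *)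
Lemma runs_period_gt_tight : g < d -> b <= d -> n + e < f + g + b + 1 -> e + g < n ->
  2 * d < n -> False.
Proof.
have [gt_b gt_bf] := runs_overlaps_short; move=> lt_gd le_bd tight_f tight_g tight_d.
case: (Z_le_gt_dec 6 d) => [d_ge6|d_lt6].
  have [m [d_m n_m g_m e_m [f_m b_m]]] : exists m, [/\ d = 2 * m, n = 4 * m + 1,
      g = m + 1, e = 3 * m - 1 & f = 4 * m - 1 /\ b = 2 * m].
    by exists (g - 1); split; lia.
  apply: (runU_mismatch_right (k := 0) (i := 3 * m - 1) (j := 5 * m - 1)); try lia.
  transitivity (X (m - 1)); first by symmetry; apply: (runU_match (k := 0)); lia.
  transitivity (X (5 * m)); first by apply: (X_period (k := 1)); lia.
  transitivity (X (4 * m - 1)); first by symmetry; apply: (runV_match (k := 0)); lia.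
  transitivity (X (3 * m - 2)); first by symmetry; apply: (runV_match (k := 0)); lia.
  transitivity (X (5 * m - 2)); first by apply: (runU_match (k := 0)); lia.
  transitivity (X (m - 3)); first by symmetry; apply: (X_period (k := 1)); lia.
  transitivity (X (3 * m - 3)); first by apply: (runU_match (k := 0)); lia.
  transitivity (X (4 * m - 2)); first by apply: (runV_match (k := 0)); lia.
  by apply: (runV_match (k := 0)); lia.
have [n9 e5 f7 d4 [g3 b4]] : [/\ n = 9, e = 5, f = 7, d = 4 & g = 3 /\ b = 4] by split; lia.
apply: (runU_mismatch_right (k := 0) (i := 5) (j := 9)); try lia.
transitivity (X 1); first by symmetry; apply: (runU_match (k := 0)); lia.
transitivity (X 10); first by apply: (X_period (k := 1)); lia.
transitivity (X 7); first by symmetry; apply: (runV_match (k := 0)); lia.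
transitivity (X 4); first by symmetry; apply: (runV_match (k := 0)); lia.
transitivity (X 0); first by symmetry; apply: (runU_match (k := 0)); lia.
by apply: (X_period (k := 1)); lia.
Qed.

Lemma runs_period_gt_early_start : g < d -> b <= d -> False.
Proof.
have [gt_b gt_bf] := runs_overlaps_short; move=> lt_gd le_bd.
case: (Z_le_gt_dec (f + g + b + 1) (n + e)) => [loose_f|tight_f].
  apply: (square_mismatch_near (p := b + f - n) (a := d) (c := g)).
  - by apply: (runU_match (k := 0)); lia.
  - by apply: (runU_match (k := 0)); lia.
  - by apply: (runV_match (k := 0)); lia.
  - by apply: (runV_mismatch_right (k := -1)); lia.
case: (Z_le_gt_dec n (e + g)) => [loose_g|tight_g].
  apply: (square_mismatch_far (p := -1 - g) (a := g) (c := d)).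
  - by apply: (runV_match (k := -1)); lia.
  - by apply: (runV_match (k := -1)); lia.
  - by apply: (runU_match (k := -1)); lia.
  - by apply: (runU_mismatch_left (k := 0)); lia.
case: (Z_le_gt_dec n (2 * d)) => [n_2d|tight_d]; last by apply: runs_period_gt_tight; lia.
apply: (Xprim (q := d)); [lia | by exists 2; lia |].
by apply: (run_covering_period Xn runU); [lia | lia | lia | exists 2; lia].
Qed.

Lemma no_run_with_larger_excess : False.
Proof.
have ne_dg := runs_periods_neq.
case: (Z_lt_le_dec d g) => [|le_gd]; first exact: runs_period_lt.
case: (Z_lt_le_dec d b) => [lt_db|le_bd].
  by apply: runs_period_gt_late_start; lia.
by apply: runs_period_gt_early_start; lia.
Qed.

End TwoRuns.

Lemma run_excess_le X U V n d g lo hi lo' hi' :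
  is_period X n -> primitive X n ->
  run X U d lo hi -> primitive U d -> run X V g lo' hi' -> primitive V g ->
  0 < d -> 0 < g -> 2 * d <= n -> 2 * g <= n -> 3 * n <= 4 * (hi - lo - d) + 7 ->
  hi' - lo' - g <= hi - lo - d.
Proof.
move=> Xn Xprim runU Uprim runV Vprim d_gt0 g_gt0 dn gn long_e.
rewrite Z.le_ngt => longer.
have [M [b [lo'E b_range]]] : exists M b, lo' = lo + M * n + b /\ 0 <= b < n.
  exists ((lo' - lo) / n), ((lo' - lo) mod n).
  by have := Z.div_mod (lo' - lo) n; have := Z.mod_pos_bound (lo' - lo) n; lia.
pose X' i := X (i + lo).
have X'n : is_period X' n by move=> i; rewrite /X' -(Xn (i + lo)); congr X; lia.
have runU' : run X' (fun j => U (j + lo)) d 0 (hi - lo - d + d).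
  by apply: (run_shift runU) => //; lia.
have runV' : run X' (fun j => V (j + (lo + M * n))) g b (b + (hi' - lo' - g) + g).
  apply: (run_shift runV); try lia.
  by move=> i; apply: (is_period_congr (m := M) Xn); lia.
have [Vg VX _ Vhi] := runV.
have short_V := run_length_lt Xn Vg VX Vhi ltac:(lia) g_gt0.
apply: (no_run_with_larger_excess X'n (primitive_shift Xprim) runU' (primitive_shift Uprim)
  runV' (primitive_shift Vprim)); lia.
Qed.

Local Close Scope Z_scope.

Definition periodic_ext (w : seq bool) (i : Z) : bool :=
  nth false w (Z.to_nat (i mod Z.of_nat (size w))).

Lemma Z_of_nat_modn a b : 0 < b -> Z.of_nat (a %% b) = (Z.of_nat a mod Z.of_nat b)%Z.
Proof.
move=> b_gt0; apply: (@Z.mod_unique _ _ (Z.of_nat (a %/ b))); first by left; lia.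
by rewrite {1}(divn_eq a b) Nat2Z.inj_add Nat2Z.inj_mul; lia.
Qed.

Lemma periodic_ext_nat w i : 0 < size w ->
  periodic_ext w (Z.of_nat i) = nth false w (i %% size w).
Proof. by move=> w_gt0; rewrite /periodic_ext -Z_of_nat_modn // Nat2Z.id. Qed.

Lemma periodic_ext_neg w j : 0 < size w ->
  periodic_ext w (-1 - Z.of_nat j) = nth false w ((size w).-1 - j %% size w).
Proof.
move=> w_gt0; rewrite /periodic_ext; congr nth; apply: Nat2Z.inj; rewrite Z2Nat.id; last first.
  by have := Z.mod_pos_bound (-1 - Z.of_nat j) (Z.of_nat (size w)); lia.
symmetry; apply: (@Z.mod_unique _ _ (- Z.of_nat (j %/ size w) - 1)); first by left; lia.
by rewrite {1}(divn_eq j (size w)) Nat2Z.inj_add Nat2Z.inj_mul; lia.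
Qed.

Lemma is_period_periodic_ext w : is_period (periodic_ext w) (Z.of_nat (size w)).
Proof.
move=> i; rewrite /periodic_ext.
by rewrite -[in (i + _)%Z](Z.mul_1_l (Z.of_nat (size w))) Z_mod_plus_full.
Qed.

Lemma nth_flatten_nseq (T : Type) (x0 : T) m (w : seq T) i : i < m * size w ->
  nth x0 (flatten (nseq m w)) i = nth x0 w (i %% size w).
Proof.
elim: m i => [|m IHm] i; first by rewrite mul0n.
rewrite mulSn /= nth_cat => lt_i; case: ltnP => [lt_iw|le_wi].
  by rewrite modn_small.
by rewrite IHm; [rewrite -{2}(subnK le_wi) modnDr | lia].
Qed.

Lemma primitive_periodic_ext w : aperiodic w ->
  primitive (periodic_ext w) (Z.of_nat (size w)).
Proof.
move=> w_aper q q_range [m Em] Pq; apply: w_aper.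
have q_nat : q = Z.of_nat (Z.to_nat q) by lia.
have dvd_q : Z.to_nat q %| size w by apply/dvdnP; exists (Z.to_nat m); lia.
have size_take_q : size (take (Z.to_nat q) w) = Z.to_nat q by rewrite size_take_min; lia.
exists (Z.to_nat q); split => //; try lia.
apply: (@eq_from_nth _ false).
  by rewrite size_flatten /shape map_nseq sumn_nseq size_take_q mulnC divnK.
move=> i lt_i; rewrite nth_flatten_nseq size_take_q; last by rewrite divnK.
have ext_nat j : j < size w -> nth false w j = periodic_ext w (Z.of_nat j).
  by move=> lt_j; rewrite periodic_ext_nat ?modn_small //; lia.
have lt_iq : i %% Z.to_nat q < Z.to_nat q by rewrite ltn_mod; lia.
rewrite nth_take // !ext_nat //; last by lia.
rewrite Z_of_nat_modn -?q_nat; last by lia.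
apply: (is_period_congr (m := - (Z.of_nat i / q)) Pq).
by have := Z.div_mod (Z.of_nat i) q; lia.
Qed.

Lemma nth_rotr (k : nat) (s : seq bool) j : k < size s -> j < size s ->
  nth false (rotr k s) j = nth false s ((j + (size s - k)) %% size s).
Proof.
move=> lt_k lt_j; rewrite /rotr /rot nth_cat size_drop; case: ltnP => C.
  by rewrite nth_drop modn_small; [congr nth|]; lia.
rewrite nth_take; last by lia.
by rewrite (_ : j + _ = size s + (j - k)) ?modnDl ?modn_small; [congr nth|..]; lia.
Qed.

Lemma periodic_ext_rotr k s i : k < size s ->
  periodic_ext (rotr k s) i = periodic_ext s (i - Z.of_nat k).
Proof.
move=> lt_k; have m_gt0 : (0 < Z.of_nat (size s))%Z by lia.
have := Z.mod_pos_bound i _ m_gt0; have := Z.div_mod i (Z.of_nat (size s)).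
move=> i_div i_mod; rewrite {1}/periodic_ext size_rotr nth_rotr; try lia.
rewrite -periodic_ext_nat; last by lia.
by apply: (is_period_congr (m := i / Z.of_nat (size s) - 1) (is_period_periodic_ext s)); lia.
Qed.

Lemma nth_pattern (w : seq bool) q r x i : r < size w -> i <= size w * q + r ->
  nth false (flatten (nseq q w) ++ take r w ++ [:: x]) i =
  if i == size w * q + r then x else nth false w (i %% size w).
Proof.
move=> lt_r le_i; rewrite nth_cat size_flatten /shape map_nseq sumn_nseq.
case: ltnP => [lt_iq|le_qi].
  by rewrite nth_flatten_nseq; [case: eqP => //; lia | lia].
rewrite nth_cat size_take_min (_ : minn r (size w) = r); last by lia.
case: ltnP => [lt_ir|le_ri].
  rewrite nth_take //; case: eqP => [|_]; first by lia.
  by rewrite {2}(_ : i = q * size w + (i - size w * q)) 1?modnMDl 1?modn_small; lia.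
by rewrite (_ : i - _ - r = 0) /=; [case: eqP => //; lia | lia].
Qed.

Lemma add_le d s : add d s <= size s.
Proof. by rewrite /add -{3}(size_iota 0 (size s)) find_size. Qed.

Lemma add_match d s j : j < add d s ->
  nth false s ((size s).-1 - j) = nth false s (d.-1 - j %% d).
Proof.
move=> lt_j; have lt_js : j < size s by have := add_le d s; lia.
by have := before_find 0 lt_j; rewrite nth_iota // add0n => /negbFE/eqP.
Qed.

Lemma add_mismatch d s : add d s < size s ->
  nth false s ((size s).-1 - add d s) != nth false s (d.-1 - add d s %% d).
Proof.
move=> lt_add.
have has_mismatch : has (fun i => nth false s ((size s).-1 - i) != nth false s (d.-1 - i %% d))
                        (iota 0 (size s)) by rewrite has_find size_iota.
by have := nth_find 0 has_mismatch; rewrite nth_iota.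
Qed.

Section BSequence.

Variables (n c d : nat) (s : seq bool).
Hypothesis sB : inB n c d s.

Lemma inB_size_prefix : size (take d s) = d.
Proof. by case: sB => -[size_s _ _ le_d] _; rewrite size_take_min size_s; lia. Qed.

Lemma inB_prefix i : i < c + d ->
  nth false s i = if i == c + d - 1 then ~~ nth false s ((c + d - 1) %% d)
                   else nth false s (i %% d).
Proof.
case: sB => -[size_s _ d_gt0 le_d] [_ _ prefix] lt_i.
have lt_r := ltn_pmod (c + d - 1) d_gt0.
have cd_div : d * ((c + d - 1) %/ d) + (c + d - 1) %% d = c + d - 1.
  by rewrite mulnC -divn_eq.
have take_r : take ((c + d - 1) %% d) s = take ((c + d - 1) %% d) (take d s).
  by rewrite -take_min; congr take; apply/esym/minn_idPl; lia.
rewrite -(nth_take _ lt_i) prefix take_r nth_pattern inB_size_prefix ?cd_div //; try lia.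
by case: eqP => // _; rewrite nth_take // ltn_mod.
Qed.

End BSequence.

Lemma run_of_inB n c d s : inB n c d s ->
  run (periodic_ext s) (periodic_ext (take d s)) (Z.of_nat d)
      (- Z.of_nat (add d s)) (Z.of_nat (c + d - 1)).
Proof.
move=> sB; have [[size_s le_c d_gt0 le_d] _] := sB.
have size_d := inB_size_prefix sB.
have ext_s j : j < n -> periodic_ext s (Z.of_nat j) = nth false s j.
  by move=> lt_j; rewrite periodic_ext_nat size_s ?modn_small //; lia.
have ext_prefix j : periodic_ext (take d s) (Z.of_nat j) = nth false s (j %% d).
  by rewrite periodic_ext_nat size_d ?nth_take ?ltn_mod //; lia.
have ext_prefix_neg j :
    periodic_ext (take d s) (-1 - Z.of_nat j) = nth false s (d.-1 - j %% d).
  by rewrite periodic_ext_neg size_d ?nth_take //; lia.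
have agree i : (- Z.of_nat (add d s) <= i < Z.of_nat (c + d - 1))%Z ->
    periodic_ext s i = periodic_ext (take d s) i.
  move=> Hi; case: (Z_le_gt_dec 0 i) => [i_ge0|i_lt0].
    rewrite -(Z2Nat.id i i_ge0) ext_s ?ext_prefix 1?(inB_prefix sB); try lia.
    by case: eqP => //; lia.
  have [j Ej] : exists j, i = (-1 - Z.of_nat j)%Z by exists (Z.to_nat (-1 - i)); lia.
  have lt_j : j < add d s by lia.
  have lt_jn : j < n by have := add_le d s; lia.
  rewrite Ej ext_prefix_neg periodic_ext_neg size_s ?(modn_small lt_jn); last by lia.
  by rewrite -size_s (add_match lt_j).
have mismatch_hi : periodic_ext s (Z.of_nat (c + d - 1)) <>
                   periodic_ext (take d s) (Z.of_nat (c + d - 1)).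
  rewrite ext_s; last by lia.
  rewrite (inB_prefix sB) ?eqxx ?ext_prefix; last by lia.
  by case: (nth _ _ _).
have short := run_length_lt (is_period_periodic_ext s) (is_period_periodic_ext (take d s))
  agree mismatch_hi.
rewrite size_d size_s in short.
have lt_add : add d s < n by have := short ltac:(lia) ltac:(lia); lia.
split => //; first by have := is_period_periodic_ext (take d s); rewrite size_d.
rewrite (_ : (- Z.of_nat (add d s) - 1 = -1 - Z.of_nat (add d s))%Z); last by lia.
rewrite ext_prefix_neg periodic_ext_neg size_s ?(modn_small lt_add); last by lia.
by apply/eqP; rewrite -size_s add_mismatch ?size_s.
Qed.

Theorem lemma8 (n w : nat) (s : seq bool) (d : nat) :
  0 < n -> 0 < w -> (3 * n) %/ 4 <= w ->
  inB n (uphalf n) d s ->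
  add d s = w - uphalf n ->
  forall (k d' : nat), k < n -> inB n (uphalf n) d' (Rshift k s) ->
    add d' (Rshift k s) <= add d s.
Proof.
move=> n_gt0 w_gt0 le_w sB add_s k d' lt_k rB.
have [[size_s _ d_gt0 le_d] [s_aper prefix_aper _]] := sB.
have [[_ _ d'_gt0 le_d'] [_ prefix_aper' _]] := rB.
have Xn := is_period_periodic_ext s; rewrite size_s in Xn.
have Xprim := primitive_periodic_ext s_aper; rewrite size_s in Xprim.
have Uprim := primitive_periodic_ext prefix_aper; rewrite (inB_size_prefix sB) in Uprim.
have Vprim := primitive_periodic_ext prefix_aper'; rewrite (inB_size_prefix rB) in Vprim.
have shift_s i : periodic_ext s i = periodic_ext (Rshift k s) (i + Z.of_nat k).
  by rewrite /Rshift periodic_ext_rotr ?size_s // Z.add_simpl_r.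
have runV := run_shift (run_of_inB rB) shift_s erefl erefl.
have := run_excess_le Xn Xprim (run_of_inB sB) Uprim runV (primitive_shift Vprim).
by move=> /(_ ltac:(lia) ltac:(lia) ltac:(lia) ltac:(lia) ltac:(lia)); lia.
Qed.
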